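(* For every $n$, every graph $G=(V,E)$ on $V=\{1,\ldots,n\}$, every bilinear function $b(\mathbf x)=\sum_{ij\in E}a_{ij}x_ix_j$ with real coefficients, and every $\mathbf x\in[0,1]^n$, \[\operatorname{mcgap}[b](\mathbf x)\leqslant 600\sqrt n\,\operatorname{chgap}[b](\mathbf x).\]
   Context: Let $G=(V,E)$ be an undirected graph with $V=\{1,\ldots,n\}$; write $ij$ for the edge $\{i,j\}$. A bilinear function is $b:[0,1]^n\to\mathbb R$, $b(\mathbf x)=\sum_{ij\in E}a_{ij}x_ix_j$ with real coefficients $a_{ij}$. Its graph is $B=\{(\mathbf x,z)\in[0,1]^n\times\mathbb R: z=b(\mathbf x)\}$, and $\operatorname{conv}(B)$ is its convex hull. The McCormick polytopes are $P=\{(\mathbf x,\mathbf y)\in[0,1]^n\times[0,1]^{|E|}: y_{ij}\le x_i,\ y_{ij}\le x_j,\ y_{ij}\ge x_i+x_j-1\ \forall ij\in E\}$ and $Q=\{(\mathbf x,z)\in[0,1]^n\times\mathbb R:\exists\mathbf y\in[0,1]^{|E|}\text{ with }(\mathbf x,\mathbf y)\in P,\ z=\sum_{ij\in E}a_{ij}y_{ij}\}$. Define for $\mathbf x\in[0,1]^n$: $\operatorname{cav}[b](\mathbf x)=\max\{z:(\mathbf x,z)\in\operatorname{conv}(B)\}$, $\operatorname{vex}[b](\mathbf x)=\min\{z:(\mathbf x,z)\in\operatorname{conv}(B)\}$, $\operatorname{mcu}[b](\mathbf x)=\max\{z:(\mathbf x,z)\in Q\}$, $\operatorname{mcl}[b](\mathbf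 x)=\min\{z:(\mathbf x,z)\in Q\}$, the convex hull gap $\operatorname{chgap}[b]=\operatorname{cav}[b]-\operatorname{vex}[b]$ and the McCormick gap $\operatorname{mcgap}[b]=\operatorname{mcu}[b]-\operatorname{mcl}[b]$. *)

From Stdlib Require Import Reals List.
Import ListNotations.
Open Scope R_scope.

(* Vertices are 0,...,n-1 (the paper's 1,...,n shifted by one).
   Points of R^n are functions nat -> R; only coordinates < n matter. *)

Fixpoint sumR (m : nat) (f : nat -> R) : R :=
  match m with
  | O => 0
  | S k => sumR k f + f k
  end.

Definition in_box (n : nat) (x : nat -> R) : Prop :=
  forall i, (i < n)%nat -> 0 <= x i <= 1.

(* A simple undirected graph on {0,..,n-1}: each edge {i,j} is stored once
   as the pair (i,j) with i < j < n, without repetitions. *)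
Definition is_graph (n : nat) (E : list (nat * nat)) : Prop :=
  NoDup E /\ forall i j, In (i, j) E -> (i < j < n)%nat.

Definition bilin (E : list (nat * nat)) (a : nat -> nat -> R) (x : nat -> R) : R :=
  fold_right (fun e acc => a (fst e) (snd e) * x (fst e) * x (snd e) + acc) 0 E.

(* (x,z) in conv(B), B = graph of b over [0,1]^n:
   a finite convex combination of points (p_k, b(p_k)), p_k in [0,1]^n. *)
Definition in_convB (n : nat) (E : list (nat * nat)) (a : nat -> nat -> R)
    (x : nat -> R) (z : R) : Prop :=
  exists (m : nat) (lam : nat -> R) (p : nat -> nat -> R),
    (forall k, (k < m)%nat -> 0 <= lam k) /\
    sumR m lam = 1 /\
    (forall k, (k < m)%nat -> in_box n (p k)) /\
    (forall i, (i < n)%nat -> x i = sumR m (fun k => lam k * p k i)) /\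
    z = sumR m (fun k => lam k * bilin E a (p k)).

Definition in_P (n : nat) (E : list (nat * nat)) (x : nat -> R) (y : nat -> nat -> R) : Prop :=
  in_box n x /\
  forall i j, In (i, j) E ->
    0 <= y i j <= 1 /\ y i j <= x i /\ y i j <= x j /\ x i + x j - 1 <= y i j.

Definition in_Q (n : nat) (E : list (nat * nat)) (a : nat -> nat -> R)
    (x : nat -> R) (z : R) : Prop :=
  exists y : nat -> nat -> R, in_P n E x y /\
    z = fold_right (fun e acc => a (fst e) (snd e) * y (fst e) (snd e) + acc) 0 E.

Definition is_max (S : R -> Prop) (z : R) : Prop := S z /\ forall w, S w -> w <= z.
Definition is_min (S : R -> Prop) (z : R) : Prop := S z /\ forall w, S w -> z <= w.

From Stdlib Require Import Reals List.
Open Scope R_scope.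
From Stdlib Require Import Lra Lia Psatz Bool.
Import ListNotations.

(* The McCormick gap at x is at most W = sum_e |a_e| (U_e - L_e), where
   [L_e, U_e] is the McCormick range of x_i x_j.  For every sign vector s the
   point x lifts to conv(B) with value sum_e a_e (U_e if s_i = s_j, L_e
   otherwise): a mixture of 0/1 points obtained by cutting [0,1] at all the
   x_i and 1 - x_i.  So cav - vex dominates the difference of two such values,
   a quadratic form in signs with coefficients c_e = a_e (U_e - L_e).
   Decoupling the form by a random split of the vertices and applying
   Khintchine's inequality to each row produces two sign vectors whose values
   differ by at least W / (8 sqrt n); hence the constant 600 can be 8. *)

Lemma sumR_ext m f g : (forall i, (i < m)%nat -> f i = g i) -> sumR m f = sumR m g.
Proof.
  induction m as [|m IH]; intros H; simpl; [reflexivity|].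
  rewrite IH by (intros; apply H; lia). rewrite H by lia. reflexivity.
Qed.

Lemma sumR_add m f g : sumR m (fun i => f i + g i) = sumR m f + sumR m g.
Proof. induction m as [|m IH]; simpl; [lra|]. rewrite IH. lra. Qed.

Lemma sumR_scal m c f : sumR m (fun i => c * f i) = c * sumR m f.
Proof. induction m as [|m IH]; simpl; [lra|]. rewrite IH. lra. Qed.

Lemma sumR_le m f g : (forall i, (i < m)%nat -> f i <= g i) -> sumR m f <= sumR m g.
Proof.
  induction m as [|m IH]; intros H; simpl; [lra|].
  specialize (IH (fun i Hi => H i ltac:(lia))). specialize (H m ltac:(lia)). lra.
Qed.

Lemma sumR_eq0 m f : (forall i, (i < m)%nat -> f i = 0) -> sumR m f = 0.
Proof.
  induction m as [|m IH]; intros H; simpl; [reflexivity|].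
  rewrite IH by (intros; apply H; lia). rewrite H by lia. lra.
Qed.

Lemma sumR_ge0 m f : (forall i, (i < m)%nat -> 0 <= f i) -> 0 <= sumR m f.
Proof. intros H. rewrite <- (sumR_eq0 m (fun _ => 0)) by auto. now apply sumR_le. Qed.

Lemma sumR_Sl m f : sumR (S m) f = f O + sumR m (fun k => f (S k)).
Proof. induction m as [|m IH]; [simpl; lra|]. cbn [sumR] in *. rewrite IH. lra. Qed.

Lemma sumR_delta m b f : (b < m)%nat -> sumR m (fun j => if b =? j then f j else 0) = f b.
Proof.
  induction m as [|m IH]; intros Hb; [lia|]. simpl.
  destruct (Nat.eq_dec b m) as [->|Hne].
  - rewrite Nat.eqb_refl, sumR_eq0; [lra|].
    intros i Hi. destruct (Nat.eqb_spec m i); [lia|reflexivity].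
  - rewrite IH by lia. destruct (Nat.eqb_spec b m); [lia|lra].
Qed.

Definition lsum {A : Type} (f : A -> R) (l : list A) : R :=
  fold_right (fun e acc => f e + acc) 0 l.

Lemma lsum_cons {A} (f : A -> R) e l : lsum f (e :: l) = f e + lsum f l.
Proof. reflexivity. Qed.

Lemma lsum_ext {A} (f g : A -> R) l : (forall e, In e l -> f e = g e) -> lsum f l = lsum g l.
Proof.
  induction l as [|e l IH]; intros H; [reflexivity|].
  rewrite !lsum_cons, H by (simpl; auto). rewrite IH by (intros; apply H; simpl; auto).
  reflexivity.
Qed.

Lemma lsum_le {A} (f g : A -> R) l : (forall e, In e l -> f e <= g e) -> lsum f l <= lsum g l.
Proof.
  induction l as [|e l IH]; intros H; [simpl; lra|]. rewrite !lsum_cons.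
  specialize (IH (fun e' He' => H e' (or_intror He'))). specialize (H e (or_introl eq_refl)). lra.
Qed.

Lemma lsum_add {A} (f g : A -> R) l : lsum (fun e => f e + g e) l = lsum f l + lsum g l.
Proof. induction l as [|e l IH]; simpl; [lra|]. rewrite IH. lra. Qed.

Lemma lsum_sub {A} (f g : A -> R) l : lsum (fun e => f e - g e) l = lsum f l - lsum g l.
Proof. induction l as [|e l IH]; simpl; [lra|]. rewrite IH. lra. Qed.

Lemma lsum_scal {A} c (f : A -> R) l : lsum (fun e => c * f e) l = c * lsum f l.
Proof. induction l as [|e l IH]; simpl; [lra|]. rewrite IH. lra. Qed.

Lemma lsum_exchange {A B} (c : A -> R) (h : B -> A -> R) (P : list A) (E : list B) :
  lsum (fun p => c p * lsum (fun e => h e p) E) P = lsum (fun e => lsum (fun p => c p * h e p) P) E.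
Proof.
  induction E as [|e E IH].
  - induction P as [|p P IHP]; simpl in *; [lra|]. rewrite IHP. lra.
  - rewrite lsum_cons, <- IH, <- lsum_add. apply lsum_ext. intros p _. rewrite lsum_cons. lra.
Qed.

Lemma sumR_nth_lsum {A} (d : A) (P : list A) g :
  sumR (length P) (fun k => g (nth k P d)) = lsum g P.
Proof.
  induction P as [|p P IH]; [reflexivity|].
  cbn [length]. rewrite sumR_Sl, lsum_cons, <- IH. reflexivity.
Qed.

(** * Averages over sign vectors *)

Definition upd (v : nat -> R) (k : nat) (s : R) : nat -> R :=
  fun j => if j =? k then s else v j.

(* The expectation over uniform random sign vectors in {-1,1}^k; coordinates
   j >= k are frozen at 0. *)
Fixpoint sign_avg (k : nat) (f : (nat -> R) -> R) : R :=
  match k with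
  | O => f (fun _ => 0)
  | S k' => (sign_avg k' (fun v => f (upd v k' 1)) + sign_avg k' (fun v => f (upd v k' (-1)))) / 2
  end.

Definition is_sign_vector (k : nat) (v : nat -> R) : Prop :=
  forall j, (j < k)%nat -> v j = 1 \/ v j = -1.

Lemma is_sign_vector_upd k v s :
  is_sign_vector k v -> (s = 1 \/ s = -1) -> is_sign_vector (S k) (upd v k s).
Proof.
  intros H Hs j Hj. unfold upd. destruct (Nat.eqb_spec j k); auto. apply H. lia.
Qed.

Lemma sign_avg_le k f g :
  (forall v, is_sign_vector k v -> f v <= g v) -> sign_avg k f <= sign_avg k g.
Proof.
  revert f g; induction k as [|k IH]; intros f g H; simpl.
  - apply H. intros j Hj; lia.
  - assert (H1 : sign_avg k (fun v => f (upd v k 1)) <= sign_avg k (fun v => g (upd v k 1)))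
      by (apply IH; intros v Hv; apply H, is_sign_vector_upd; auto).
    assert (H2 : sign_avg k (fun v => f (upd v k (-1))) <= sign_avg k (fun v => g (upd v k (-1))))
      by (apply IH; intros v Hv; apply H, is_sign_vector_upd; auto).
    lra.
Qed.

Lemma sign_avg_ext k f g :
  (forall v, is_sign_vector k v -> f v = g v) -> sign_avg k f = sign_avg k g.
Proof. intros H. apply Rle_antisym; apply sign_avg_le; intros v Hv; rewrite H by auto; lra. Qed.

Lemma sign_avg_add k f g : sign_avg k (fun v => f v + g v) = sign_avg k f + sign_avg k g.
Proof.
  revert f g; induction k as [|k IH]; intros f g; simpl; [reflexivity|]. rewrite !IH. lra.
Qed.

Lemma sign_avg_sub k f g : sign_avg k (fun v => f v - g v) = sign_avg k f - sign_avg k g.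
Proof.
  revert f g; induction k as [|k IH]; intros f g; simpl; [reflexivity|]. rewrite !IH. lra.
Qed.

Lemma sign_avg_scal k c f : sign_avg k (fun v => c * f v) = c * sign_avg k f.
Proof.
  revert f; induction k as [|k IH]; intros f; simpl; [reflexivity|]. rewrite !IH. lra.
Qed.

Lemma sign_avg_const k c : sign_avg k (fun _ => c) = c.
Proof. induction k as [|k IH]; simpl; [reflexivity|]. rewrite IH. lra. Qed.

Lemma sign_avg_sumR k m (F : nat -> (nat -> R) -> R) :
  sign_avg k (fun v => sumR m (fun i => F i v)) = sumR m (fun i => sign_avg k (F i)).
Proof.
  induction m as [|m IH]; simpl; [apply sign_avg_const|]. rewrite sign_avg_add, IH. reflexivity.
Qed.

Lemma sign_avg_le_witness k f : exists v, is_sign_vector k v /\ sign_avg k f <= f v.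
Proof.
  revert f; induction k as [|k IH]; intros f; simpl.
  - exists (fun _ => 0). split; [intros j Hj; lia|lra].
  - destruct (IH (fun v => f (upd v k 1))) as [v1 [S1 H1]].
    destruct (IH (fun v => f (upd v k (-1)))) as [v2 [S2 H2]].
    destruct (Rle_dec (f (upd v2 k (-1))) (f (upd v1 k 1))).
    + exists (upd v1 k 1). split; [apply is_sign_vector_upd; auto|lra].
    + exists (upd v2 k (-1)). split; [apply is_sign_vector_upd; auto|lra].
Qed.

Lemma sign_avg_coord k i : (i < k)%nat -> sign_avg k (fun v => v i) = 0.
Proof.
  induction k as [|k IH]; intros Hi; [lia|]. simpl. unfold upd.
  destruct (Nat.eqb_spec i k).
  - rewrite !sign_avg_const. lra.
  - rewrite IH by lia. lra.
Qed.

Lemma sign_avg_coord_mul k i j : (i < k)%nat -> (j < k)%nat ->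
  sign_avg k (fun v => v i * v j) = if i =? j then 1 else 0.
Proof.
  induction k as [|k IH]; intros Hi Hj; [lia|]. simpl. unfold upd.
  destruct (Nat.eqb_spec i k) as [->|Hik]; destruct (Nat.eqb_spec j k) as [->|Hjk].
  - rewrite Nat.eqb_refl, !sign_avg_const. lra.
  - rewrite !sign_avg_scal, sign_avg_coord by lia.
    destruct (Nat.eqb_spec k j); [lia|lra].
  - rewrite (sign_avg_ext k (fun v => v i * 1) (fun v => 1 * v i)) by (intros; lra).
    rewrite (sign_avg_ext k (fun v => v i * -1) (fun v => -1 * v i)) by (intros; lra).
    rewrite !sign_avg_scal, sign_avg_coord by lia.
    destruct (Nat.eqb_spec i k); [lia|lra].
  - rewrite !IH by lia. lra.
Qed.

(** * Khintchine's inequality *)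

Definition rsum (k : nat) (b v : nat -> R) : R := sumR k (fun j => b j * v j).

Lemma rsum_upd k b v s : rsum (S k) b (upd v k s) = rsum k b v + b k * s.
Proof.
  unfold rsum. simpl. unfold upd at 2. rewrite Nat.eqb_refl. f_equal.
  apply sumR_ext. intros i Hi. unfold upd. destruct (Nat.eqb_spec i k); [lia|reflexivity].
Qed.

Lemma sign_avg_rsum_sq k b : sign_avg k (fun v => rsum k b v ^ 2) = sumR k (fun j => b j ^ 2).
Proof.
  induction k as [|k IH]; [unfold rsum; simpl; lra|]. cbn [sign_avg sumR].
  rewrite (sign_avg_ext k (fun v => rsum (S k) b (upd v k 1) ^ 2) (fun v => (rsum k b v + b k) ^ 2)) by (intros; rewrite rsum_upd; f_equal; lra).
  rewrite (sign_avg_ext k (fun v => rsum (S k) b (upd v k (-1)) ^ 2) (fun v => (rsum k b v - b k) ^ 2)) by (intros; rewrite rsum_upd; f_equal; lra).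
  rewrite <- sign_avg_add.
  rewrite (sign_avg_ext k _ (fun v => 2 * rsum k b v ^ 2 + 2 * b k ^ 2)) by (intros; ring).
  rewrite sign_avg_add, !sign_avg_scal, sign_avg_const, IH. lra.
Qed.

Lemma sign_avg_rsum_pow4_le k b :
  sign_avg k (fun v => rsum k b v ^ 4) <= 3 * sumR k (fun j => b j ^ 2) ^ 2.
Proof.
  induction k as [|k IH]; [unfold rsum; simpl; lra|]. cbn [sign_avg sumR].
  rewrite (sign_avg_ext k (fun v => rsum (S k) b (upd v k 1) ^ 4) (fun v => (rsum k b v + b k) ^ 4)) by (intros; rewrite rsum_upd; f_equal; lra).
  rewrite (sign_avg_ext k (fun v => rsum (S k) b (upd v k (-1)) ^ 4) (fun v => (rsum k b v - b k) ^ 4)) by (intros; rewrite rsum_upd; f_equal; lra).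
  rewrite <- sign_avg_add.
  rewrite (sign_avg_ext k _ (fun v => 2 * rsum k b v ^ 4 + (12 * b k ^ 2 * rsum k b v ^ 2 + 2 * b k ^ 4)))
    by (intros; ring).
  rewrite !sign_avg_add, !sign_avg_scal, sign_avg_const, sign_avg_rsum_sq.
  assert (0 <= b k ^ 4) by (replace (b k ^ 4) with ((b k ^ 2) ^ 2) by ring; nra).
  nra.
Qed.

Lemma sumR_abs_sq_le k b : sumR k (fun j => Rabs (b j)) ^ 2 <= INR k * sumR k (fun j => b j ^ 2).
Proof.
  induction k as [|k IH]; [simpl; lra|]. cbn [sumR]. rewrite S_INR, <- (pow2_abs (b k)).
  set (s := sumR k (fun j => Rabs (b j))) in *.
  set (q := sumR k (fun j => b j ^ 2)) in *.
  set (c := Rabs (b k)).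
  assert (0 <= s) by (apply sumR_ge0; intros; apply Rabs_pos).
  assert (0 <= q) by (apply sumR_ge0; intros; apply pow2_ge_0).
  pose proof (pos_INR k).
  (* 2 s c <= q + k c^2, from (s - k c)^2 >= 0 and s^2 <= k q. *)
  assert (2 * s * c <= q + INR k * c ^ 2).
  { destruct (Req_dec (INR k) 0) as [Hk|Hk].
    - rewrite Hk in IH |- *. assert (s = 0) by nra. nra.
    - apply Rmult_le_reg_l with (INR k); [lra|]. pose proof (pow2_ge_0 (s - INR k * c)). nra. }
  nra.
Qed.

Lemma abs_pow4_bound y s : 0 < s -> 3 * s ^ 2 * y ^ 2 - y ^ 4 <= 2 * s ^ 3 * Rabs y.
Proof.
  intros Hs. replace (y ^ 4) with ((y ^ 2) ^ 2) by ring. rewrite <- (pow2_abs y).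
  pose proof (Rabs_pos y). set (t := Rabs y) in *.
  assert (0 <= t * (t - s) ^ 2 * (t + 2 * s)) by
    (apply Rmult_le_pos; [apply Rmult_le_pos; [lra|apply pow2_ge_0]|lra]).
  nra.
Qed.

(* Integrate [abs_pow4_bound] with [s = sqrt (3 E Y^2)] and use
   [E Y^4 <= 3 (E Y^2)^2]. *)
Lemma sumR_sq_le_sign_avg_abs_rsum k b :
  sumR k (fun j => b j ^ 2) <= 3 * sign_avg k (fun v => Rabs (rsum k b v)) ^ 2.
Proof.
  set (q := sumR k (fun j => b j ^ 2)).
  set (m := sign_avg k (fun v => Rabs (rsum k b v))).
  assert (Hq : 0 <= q) by (apply sumR_ge0; intros; apply pow2_ge_0).
  assert (Hm : 0 <= m).
  { unfold m. rewrite <- (sign_avg_const k 0). apply sign_avg_le. intros; apply Rabs_pos. }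
  destruct (Req_dec q 0) as [Hq0|Hq0]; [rewrite Hq0; nra|].
  set (s := sqrt (3 * q)).
  assert (Hs2 : s * s = 3 * q) by (apply sqrt_sqrt; lra).
  assert (Hs : 0 < s) by (apply sqrt_lt_R0; lra).
  assert (Hint : 3 * s ^ 2 * q - sign_avg k (fun v => rsum k b v ^ 4) <= 2 * s ^ 3 * m).
  { unfold q, m. rewrite <- sign_avg_rsum_sq, <- !sign_avg_scal.
    rewrite <- sign_avg_sub.
    apply sign_avg_le. intros v _. pose proof (abs_pow4_bound (rsum k b v) s Hs). lra. }
  pose proof (sign_avg_rsum_pow4_le k b) as H4. fold q in H4.
  assert (Hqs : q <= s * m).
  { replace (s ^ 2) with (3 * q) in Hint by (simpl; lra).
    replace (s ^ 3) with (3 * q * s) in Hint by (simpl; rewrite <- Hs2; ring).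
    apply Rmult_le_reg_l with (6 * q); [lra|]. lra. }
  apply Rmult_le_reg_l with q; [lra|].
  replace (q * (3 * m ^ 2)) with ((s * m) ^ 2) by (rewrite Rpow_mult_distr; simpl; rewrite Rmult_1_r, Hs2; ring).
  nra.
Qed.

Lemma khintchine k b :
  sumR k (fun j => Rabs (b j)) <= 2 * sqrt (INR k) * sign_avg k (fun v => Rabs (rsum k b v)).
Proof.
  set (l := sumR k (fun j => Rabs (b j))).
  set (m := sign_avg k (fun v => Rabs (rsum k b v))).
  assert (Hl : 0 <= l) by (apply sumR_ge0; intros; apply Rabs_pos).
  assert (Hm : 0 <= m).
  { unfold m. rewrite <- (sign_avg_const k 0). apply sign_avg_le. intros; apply Rabs_pos. }
  pose proof (sumR_abs_sq_le k b) as Hcs. fold l in Hcs.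
  pose proof (sumR_sq_le_sign_avg_abs_rsum k b) as Hq. fold m in Hq.
  pose proof (pos_INR k). pose proof (sqrt_pos (INR k)).
  pose proof (sqrt_sqrt (INR k) (pos_INR k)).
  assert (l ^ 2 <= (2 * sqrt (INR k) * m) ^ 2).
  { replace ((2 * sqrt (INR k) * m) ^ 2) with (4 * INR k * m ^ 2) by (simpl; nra). nra. }
  assert (0 <= 2 * sqrt (INR k) * m) by (apply Rmult_le_pos; lra).
  nra.
Qed.

(** * Points of the convex hull from families of intervals *)

Fixpoint chain_sorted (l0 : R) (L : list R) : Prop :=
  match L with [] => True | h :: t => l0 <= h /\ chain_sorted h t end.

Fixpoint chain_steps (l0 : R) (L : list R) : list (R * R) :=
  match L with [] => [] | h :: t => (l0, h) :: chain_steps h t end.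

Fixpoint chain_last (l0 : R) (L : list R) : R :=
  match L with [] => l0 | h :: t => chain_last h t end.

Fixpoint rinsert (v : R) (L : list R) : list R :=
  match L with
  | [] => [v]
  | h :: t => if Rle_dec v h then v :: h :: t else h :: rinsert v t
  end.

Fixpoint rsort (V : list R) : list R :=
  match V with [] => [] | v :: V' => rinsert v (rsort V') end.

Lemma rinsert_sorted L l0 v : chain_sorted l0 L -> l0 <= v -> chain_sorted l0 (rinsert v L).
Proof.
  revert l0; induction L as [|h t IH]; simpl; intros l0 H Hv; [tauto|].
  destruct (Rle_dec v h); simpl; [tauto|]. split; [tauto|]. apply IH; [tauto|lra].
Qed.

Lemma In_rinsert L v y : In y (rinsert v L) <-> v = y \/ In y L.
Proof.
  induction L as [|h t IH]; simpl; [tauto|].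
  destruct (Rle_dec v h); simpl; [tauto|]. rewrite IH. tauto.
Qed.

Lemma rsort_sorted V : (forall v, In v V -> 0 <= v) -> chain_sorted 0 (rsort V).
Proof. induction V as [|v V IH]; simpl; intros H; [tauto|]. apply rinsert_sorted; auto. Qed.

Lemma In_rsort V y : In y (rsort V) <-> In y V.
Proof. induction V as [|v V IH]; simpl; [tauto|]. rewrite In_rinsert, IH. tauto. Qed.

Lemma chain_sorted_ge L l0 y : chain_sorted l0 L -> In y L -> l0 <= y.
Proof.
  revert l0; induction L as [|h t IH]; simpl; intros l0 H Hy; [tauto|].
  destruct Hy as [<-|Hy]; [tauto|]. specialize (IH h (proj2 H) Hy). lra.
Qed.

Lemma chain_steps_le L l0 st : chain_sorted l0 L -> In st (chain_steps l0 L) -> fst st <= snd st.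
Proof.
  revert l0; induction L as [|h t IH]; simpl; intros l0 H Hst; [tauto|].
  destruct Hst as [<-|Hst]; [simpl; tauto|]. exact (IH h (proj2 H) Hst).
Qed.

Lemma lsum_chain_steps_length L l0 :
  lsum (fun st => snd st - fst st) (chain_steps l0 L) = chain_last l0 L - l0.
Proof.
  revert l0; induction L as [|h t IH]; intros l0; [simpl; lra|].
  cbn [chain_steps chain_last]. rewrite lsum_cons, IH. simpl. lra.
Qed.

Lemma chain_last_In L l0 : chain_last l0 L = l0 \/ In (chain_last l0 L) L.
Proof. revert l0; induction L as [|h t IH]; simpl; intros l0; [auto|]. destruct (IH h); auto. Qed.

Lemma chain_last_ge L l0 y : chain_sorted l0 L -> In y (l0 :: L) -> y <= chain_last l0 L.
Proof.
  revert l0 y; induction L as [|h t IH]; simpl; intros l0 y H Hy.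
  - destruct Hy as [<-|[]]; lra.
  - destruct Hy as [<-|Hy].
    + specialize (IH h h (proj2 H) (or_introl eq_refl)). lra.
    + apply IH; simpl; tauto.
Qed.

Definition ind_lt (u g : R) : R := if Rlt_dec u g then 1 else 0.

Definition ind_Ico (a c u : R) : R := if Rle_dec a u then ind_lt u c else 0.

Lemma ind_Ico_mul a1 c1 a2 c2 u :
  ind_Ico a1 c1 u * ind_Ico a2 c2 u = ind_Ico (Rmax a1 a2) (Rmin c1 c2) u.
Proof.
  unfold ind_Ico, ind_lt, Rmax, Rmin.
  destruct (Rle_dec a1 a2), (Rle_dec c1 c2); simpl;
  repeat match goal with |- context [Rle_dec ?x ?y] => destruct (Rle_dec x y) end;
  repeat match goal with |- context [Rlt_dec ?x ?y] => destruct (Rlt_dec x y) end; lra.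
Qed.

Lemma lsum_chain_steps_lt_le L l0 g :
  chain_sorted l0 L -> g <= l0 -> lsum (fun st => (snd st - fst st) * ind_lt (fst st) g) (chain_steps l0 L) = 0.
Proof.
  revert l0; induction L as [|h t IH]; intros l0 H Hg; [reflexivity|].
  cbn [chain_steps]. rewrite lsum_cons, IH by (simpl in H; tauto || lra).
  unfold ind_lt. simpl. destruct (Rlt_dec l0 g); lra.
Qed.

Lemma lsum_chain_steps_lt L l0 g :
  chain_sorted l0 L -> In g (l0 :: L) ->
  lsum (fun st => (snd st - fst st) * ind_lt (fst st) g) (chain_steps l0 L) = g - l0.
Proof.
  revert l0; induction L as [|h t IH]; intros l0 H Hg.
  - destruct Hg as [<-|[]]. simpl. lra.
  - cbn [chain_steps]. rewrite lsum_cons. simpl fst; simpl snd. destruct H as [Hh Ht].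
    destruct Hg as [<-|Hg].
    + rewrite lsum_chain_steps_lt_le by auto. unfold ind_lt. destruct (Rlt_dec l0 l0); lra.
    + rewrite (IH h Ht Hg).
      assert (h <= g) by (destruct Hg as [<-|Hg]; [lra|exact (chain_sorted_ge t h g Ht Hg)]).
      unfold ind_lt. destruct (Rlt_dec l0 g); lra.
Qed.

Lemma lsum_chain_steps_Ico L l0 a c :
  chain_sorted l0 L -> In a (l0 :: L) -> In c (l0 :: L) ->
  lsum (fun st => (snd st - fst st) * ind_Ico a c (fst st)) (chain_steps l0 L) = Rmax 0 (c - a).
Proof.
  intros H Ha Hc. unfold Rmax. destruct (Rle_dec 0 (c - a)).
  - rewrite (lsum_ext _ (fun st => (snd st - fst st) * ind_lt (fst st) c - (snd st - fst st) * ind_lt (fst st) a)).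
    + rewrite lsum_sub, !lsum_chain_steps_lt by auto. lra.
    + intros st _. unfold ind_Ico, ind_lt.
      destruct (Rle_dec a (fst st)), (Rlt_dec (fst st) c), (Rlt_dec (fst st) a); lra.
  - rewrite (lsum_ext _ (fun st => 0 * (snd st - fst st))).
    + rewrite lsum_scal. lra.
    + intros st _. unfold ind_Ico, ind_lt. destruct (Rle_dec a (fst st)), (Rlt_dec (fst st) c); lra.
Qed.

Fixpoint endpoints (al be : nat -> R) (n : nat) : list R :=
  match n with O => [1] | S k => al k :: be k :: endpoints al be k end.

Lemma endpoints_In al be n i :
  (i < n)%nat -> In (al i) (endpoints al be n) /\ In (be i) (endpoints al be n).
Proof.
  induction n as [|n IH]; intros Hi; [lia|]. simpl.
  destruct (Nat.eq_dec i n) as [->|]; [tauto|]. destruct IH; [lia|tauto].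
Qed.

Lemma endpoints_1 al be n : In 1 (endpoints al be n).
Proof. induction n; simpl; tauto. Qed.

Lemma endpoints_bounds al be n :
  (forall i, (i < n)%nat -> 0 <= al i <= be i /\ be i <= 1) ->
  forall y, In y (endpoints al be n) -> 0 <= y <= 1.
Proof.
  induction n as [|n IH]; simpl; intros H y Hy.
  - destruct Hy as [<-|[]]; lra.
  - destruct (H n ltac:(lia)).
    destruct Hy as [<-|[<-|Hy]]; [lra|lra|]. apply IH; auto.
Qed.

(* Layer-cake representation: with [u] uniform on [0,1], the 0/1 point
   [i |-> 1 (al i <= u < be i)] has mean [be - al], and the product of two
   coordinates has mean the length of the intersection of the intervals.
   Sorting all endpoints makes [u] a finite mixture. *)
Lemma interval_point_in_convB n E a x (al be : nat -> R) :
  is_graph n E ->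
  (forall i, (i < n)%nat -> 0 <= al i <= be i /\ be i <= 1) ->
  (forall i, (i < n)%nat -> x i = be i - al i) ->
  in_convB n E a x (lsum (fun e => a (fst e) (snd e) *
    Rmax 0 (Rmin (be (fst e)) (be (snd e)) - Rmax (al (fst e)) (al (snd e)))) E).
Proof.
  intros [_ HE] Hab Hx.
  set (L := rsort (endpoints al be n)).
  set (P := chain_steps 0 L).
  assert (HL : chain_sorted 0 L)
    by (apply rsort_sorted; intros v Hv; apply (endpoints_bounds al be n Hab v Hv)).
  assert (HLin : forall i, (i < n)%nat -> In (al i) (0 :: L) /\ In (be i) (0 :: L)).
  { intros i Hi. unfold L. destruct (endpoints_In al be n i Hi).
    split; right; apply In_rsort; assumption. }
  assert (Hlast : chain_last 0 L = 1).
  { apply Rle_antisym.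
    - destruct (chain_last_In L 0) as [->|Hi]; [lra|].
      apply (In_rsort (endpoints al be n)) in Hi. exact (proj2 (endpoints_bounds al be n Hab _ Hi)).
    - apply chain_last_ge; auto. right. apply In_rsort, endpoints_1. }
  set (ind := fun i u => ind_Ico (al i) (be i) u).
  exists (length P), (fun k => snd (nth k P (0, 0)) - fst (nth k P (0, 0))),
    (fun k i => ind i (fst (nth k P (0, 0)))).
  split; [|split; [|split; [|split]]].
  - intros k Hk. pose proof (chain_steps_le L 0 _ HL (nth_In P (0, 0) Hk)). lra.
  - rewrite (sumR_nth_lsum (0, 0) P (fun st => snd st - fst st)).
    unfold P. rewrite lsum_chain_steps_length, Hlast. lra.
  - intros k _ i _. unfold ind, ind_Ico, ind_lt.
    destruct (Rle_dec _ _); [destruct (Rlt_dec _ _)|]; lra.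
  - intros i Hi.
    rewrite (sumR_nth_lsum (0, 0) P (fun st => (snd st - fst st) * ind i (fst st))).
    unfold P, ind. destruct (HLin i Hi). rewrite lsum_chain_steps_Ico by assumption.
    rewrite Hx by auto. destruct (Hab i Hi). unfold Rmax. destruct (Rle_dec _ _); lra.
  - set (g := fun st => (snd st - fst st) *
      lsum (fun e => a (fst e) (snd e) * ind (fst e) (fst st) * ind (snd e) (fst st)) E).
    transitivity (lsum g P); [|symmetry; exact (sumR_nth_lsum (0, 0) P g)].
    unfold g, P. rewrite (lsum_exchange (fun st => snd st - fst st)).
    apply lsum_ext. intros [i j] Hij. destruct (HE i j Hij) as [Hi Hj]. simpl fst; simpl snd.
    rewrite (lsum_ext _ (fun st => a i j * ((snd st - fst st) *
      ind_Ico (Rmax (al i) (al j)) (Rmin (be i) (be j)) (fst st)))).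
    + rewrite lsum_scal, lsum_chain_steps_Ico; auto.
      * unfold Rmax. destruct (Rle_dec _ _); apply HLin; lia.
      * unfold Rmin. destruct (Rle_dec _ _); apply HLin; lia.
    + intros st _. unfold ind. rewrite <- ind_Ico_mul. ring.
Qed.

(** * McCormick widths and sign-vector points *)

Definition mc_upper (x : nat -> R) (e : nat * nat) : R := Rmin (x (fst e)) (x (snd e)).
Definition mc_lower (x : nat -> R) (e : nat * nat) : R := Rmax 0 (x (fst e) + x (snd e) - 1).
Definition mc_coef (a : nat -> nat -> R) (x : nat -> R) (e : nat * nat) : R :=
  a (fst e) (snd e) * (mc_upper x e - mc_lower x e).

Lemma mc_value_sub_le n E a x y y' : in_P n E x y -> in_P n E x y' ->
  fold_right (fun e acc => a (fst e) (snd e) * y (fst e) (snd e) + acc) 0 E -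
  fold_right (fun e acc => a (fst e) (snd e) * y' (fst e) (snd e) + acc) 0 E <=
  lsum (fun e => Rabs (mc_coef a x e)) E.
Proof.
  intros [_ HP] [_ HP'].
  change (lsum (fun e => a (fst e) (snd e) * y (fst e) (snd e)) E -
          lsum (fun e => a (fst e) (snd e) * y' (fst e) (snd e)) E <= lsum (fun e => Rabs (mc_coef a x e)) E).
  rewrite <- lsum_sub. apply lsum_le. intros [i j] Hij.
  specialize (HP i j Hij). specialize (HP' i j Hij).
  unfold mc_coef, mc_upper, mc_lower. simpl. rewrite Rabs_mult.
  assert (Hy : Rmax 0 (x i + x j - 1) <= y i j <= Rmin (x i) (x j) /\
               Rmax 0 (x i + x j - 1) <= y' i j <= Rmin (x i) (x j)).
  { unfold Rmax, Rmin. destruct (Rle_dec 0 _), (Rle_dec (x i) (x j)); lra. }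
  rewrite (Rabs_right (Rmin (x i) (x j) - Rmax 0 (x i + x j - 1))) by lra.
  destruct (Rcase_abs (a i j)); [rewrite Rabs_left by lra|rewrite Rabs_right by lra]; nra.
Qed.

(* On an edge the value is the upper McCormick bound if the two signs agree
   and the lower one if they differ. *)
Definition sign_value (E : list (nat * nat)) (a : nat -> nat -> R) (x sg : nat -> R) : R :=
  lsum (fun e => a (fst e) (snd e) *
    ((mc_upper x e + mc_lower x e) / 2 + (mc_upper x e - mc_lower x e) * sg (fst e) * sg (snd e) / 2)) E.

(* A coordinate with sign +1 uses the interval [0, x_i), one with sign -1 the
   interval [1 - x_i, 1). *)
Lemma sign_value_in_convB n E a x sg :
  is_graph n E -> in_box n x -> is_sign_vector n sg -> in_convB n E a x (sign_value E a x sg).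
Proof.
  intros HG Hx Hsg.
  set (al := fun i => if Rle_dec 0 (sg i) then 0 else 1 - x i).
  set (be := fun i => if Rle_dec 0 (sg i) then x i else 1).
  replace (sign_value E a x sg) with (lsum (fun e => a (fst e) (snd e) *
    Rmax 0 (Rmin (be (fst e)) (be (snd e)) - Rmax (al (fst e)) (al (snd e)))) E).
  - apply interval_point_in_convB; auto.
    + intros i Hi. specialize (Hx i Hi). unfold al, be. destruct (Rle_dec 0 (sg i)); lra.
    + intros i Hi. unfold al, be. destruct (Rle_dec 0 (sg i)); lra.
  - apply lsum_ext. intros [i j] Hij. destruct (proj2 HG i j Hij) as [Hi Hj].
    destruct (Hx i ltac:(lia)), (Hx j Hj). simpl. f_equal.
    unfold al, be, mc_upper, mc_lower. simpl.
    destruct (Hsg i ltac:(lia)) as [-> | ->], (Hsg j Hj) as [-> | ->];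
    repeat match goal with |- context [Rle_dec 0 ?v] => destruct (Rle_dec 0 v); try lra end;
    unfold Rmax, Rmin;
    repeat match goal with
           | |- context [Rle_dec ?u ?v] => destruct (Rle_dec u v)
           | H : context [Rle_dec ?u ?v] |- _ => destruct (Rle_dec u v)
           end; lra.
Qed.

Lemma sign_value_sub_polar E a x (A B : nat -> R) :
  sign_value E a x (fun i => A i + B i) - sign_value E a x (fun i => - A i + B i) =
  lsum (fun e => mc_coef a x e * (A (fst e) * B (snd e) + A (snd e) * B (fst e))) E.
Proof. unfold sign_value. rewrite <- lsum_sub. apply lsum_ext. intros e _. unfold mc_coef. field. Qed.

(** * The symmetric matrix of an edge weighting *)

Definition pick (e : nat * nat) (i j : nat) (r : R) : R :=
  if (fst e =? i) && (snd e =? j) then r else 0.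

Lemma pick_same i j r : pick (i, j) i j r = r.
Proof. unfold pick. simpl. now rewrite !Nat.eqb_refl. Qed.

Lemma pick_other e i j r : e <> (i, j) -> pick e i j r = 0.
Proof.
  intros Hne. destruct e as [p q]. unfold pick. simpl.
  destruct (Nat.eqb_spec p i), (Nat.eqb_spec q j); subst; simpl; congruence.
Qed.

Lemma pick_swap e i j r : pick e j i r = pick (snd e, fst e) i j r.
Proof. unfold pick. simpl. now rewrite andb_comm. Qed.

Lemma sumR_sumR_pick n M e r : (fst e < n)%nat -> (snd e < n)%nat ->
  sumR n (fun i => sumR n (fun j => M i j * pick e i j r)) = r * M (fst e) (snd e).
Proof.
  destruct e as [p q]. unfold pick. simpl. intros Hp Hq.
  rewrite (sumR_ext n _ (fun i => if p =? i then r * M i q else 0)).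
  - exact (sumR_delta n p (fun i => r * M i q) Hp).
  - intros i _. destruct (p =? i); simpl.
    + rewrite (sumR_ext n _ (fun j => if q =? j then r * M i j else 0)).
      * exact (sumR_delta n q (fun j => r * M i j) Hq).
      * intros j _. destruct (q =? j); ring.
    + apply sumR_eq0. intros; ring.
Qed.

Lemma lsum_pick_notin E (c : nat * nat -> R) i j :
  ~ In (i, j) E -> lsum (fun e => pick e i j (c e)) E = 0.
Proof.
  intros Hn. rewrite (lsum_ext _ (fun _ => 0 * 0)).
  - rewrite lsum_scal. ring.
  - intros e He. rewrite pick_other by (intros ->; auto). ring.
Qed.

Lemma lsum_pick_NoDup E (c : nat * nat -> R) i j :
  NoDup E -> In (i, j) E -> lsum (fun e => pick e i j (c e)) E = c (i, j).
Proof.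
  induction E as [|e E IH]; intros HND Hin; [destruct Hin|].
  inversion HND as [|e' E' HeE HND']; subst. rewrite lsum_cons.
  destruct Hin as [->|Hin].
  - rewrite pick_same, lsum_pick_notin by auto. ring.
  - rewrite pick_other, IH by (auto; intros ->; auto). ring.
Qed.

Definition sym_coef (E : list (nat * nat)) (c : nat * nat -> R) (i j : nat) : R :=
  lsum (fun e => pick e i j (c e) + pick e j i (c e)) E.

Lemma sumR_lsum {A} m (f : nat -> A -> R) (l : list A) :
  sumR m (fun i => lsum (f i) l) = lsum (fun e => sumR m (fun i => f i e)) l.
Proof.
  induction l as [|e l IH]; simpl.
  - apply sumR_eq0. reflexivity.
  - rewrite sumR_add. unfold lsum in *. rewrite IH. reflexivity.
Qed.

Lemma sumR_sumR_sym_coef n E c M :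
  (forall e, In e E -> (fst e < n)%nat /\ (snd e < n)%nat) ->
  sumR n (fun i => sumR n (fun j => M i j * sym_coef E c i j)) =
  lsum (fun e => c e * (M (fst e) (snd e) + M (snd e) (fst e))) E.
Proof.
  intros HE. unfold sym_coef.
  rewrite (sumR_ext n _ (fun i => lsum (fun e => sumR n (fun j => M i j * (pick e i j (c e) + pick e j i (c e)))) E))
    by (intros i _; rewrite <- sumR_lsum; apply sumR_ext; intros j _; rewrite <- lsum_scal; reflexivity).
  rewrite sumR_lsum. apply lsum_ext. intros e He. destruct (HE e He).
  rewrite (sumR_ext n _ (fun i => sumR n (fun j => M i j * pick e i j (c e)) +
                                  sumR n (fun j => M i j * pick (snd e, fst e) i j (c e))))
    by (intros i _; rewrite <- sumR_add; apply sumR_ext; intros j _; rewrite (pick_swap e i j); ring).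
  rewrite sumR_add, !sumR_sumR_pick by (simpl; auto). simpl. ring.
Qed.

Lemma sym_coef_edge E c i j : NoDup E -> (forall e, In e E -> (fst e < snd e)%nat) ->
  In (i, j) E -> sym_coef E c i j = c (i, j).
Proof.
  intros HND Hord Hij. unfold sym_coef.
  assert (Hji : ~ In (j, i) E)
    by (intros Hji; pose proof (Hord _ Hij); pose proof (Hord _ Hji); simpl in *; lia).
  rewrite lsum_add, lsum_pick_NoDup, lsum_pick_notin by auto. ring.
Qed.

Definition offdiag (i j : nat) : R := if i =? j then 0 else 1.

(* Test against the sign pattern of the upper triangle. *)
Lemma lsum_abs_le_sym_coef n E c : is_graph n E ->
  lsum (fun e => Rabs (c e)) E <=
  sumR n (fun i => sumR n (fun j => offdiag i j * Rabs (sym_coef E c i j))).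
Proof.
  intros [HND HE].
  assert (Hord : forall e, In e E -> (fst e < snd e)%nat /\ (snd e < n)%nat)
    by (intros [i j] Hij; exact (HE i j Hij)).
  set (sgn := fun i j => if i <? j then (if Rle_dec 0 (sym_coef E c i j) then 1 else -1) else 0).
  apply Rle_trans with (sumR n (fun i => sumR n (fun j => sgn i j * sym_coef E c i j))).
  - rewrite sumR_sumR_sym_coef by (intros e He; destruct (Hord e He); lia).
    right. apply lsum_ext. intros [i j] Hij. destruct (HE i j Hij) as [Hlt _].
    unfold sgn. simpl. rewrite sym_coef_edge by (auto; intros; apply Hord; auto).
    destruct (Nat.ltb_spec i j), (Nat.ltb_spec j i); try lia.
    destruct (Rle_dec 0 (c (i, j))); [rewrite Rabs_right by lra|rewrite Rabs_left by lra]; ring.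
  - apply sumR_le. intros i _. apply sumR_le. intros j _. unfold sgn, offdiag.
    pose proof (Rabs_pos (sym_coef E c i j)).
    destruct (Nat.eqb_spec i j), (Nat.ltb_spec i j); try lia; try lra.
    destruct (Rle_dec 0 _); [rewrite Rabs_right|rewrite Rabs_left]; lra.
Qed.

(** * Decoupling *)

Definition ind_pos (t : nat -> R) (i : nat) : R := (1 + t i) / 2.
Definition ind_neg (t : nat -> R) (i : nat) : R := (1 - t i) / 2.

Lemma ind_pos_neg_ge0 t i : t i = 1 \/ t i = -1 -> 0 <= ind_pos t i /\ 0 <= ind_neg t i.
Proof. unfold ind_pos, ind_neg. intros [-> | ->]; lra. Qed.

Lemma sign_avg_ind_pos_neg n i j : (i < n)%nat -> (j < n)%nat ->
  sign_avg n (fun t => ind_pos t i * ind_neg t j) = offdiag i j / 4.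
Proof.
  intros Hi Hj.
  rewrite (sign_avg_ext n _ (fun t => 1 / 4 + (1 / 4 * t i - (1 / 4 * t j + 1 / 4 * (t i * t j)))))
    by (intros t _; unfold ind_pos, ind_neg; field).
  rewrite sign_avg_add, sign_avg_sub, sign_avg_add, !sign_avg_scal, sign_avg_const,
    !sign_avg_coord, sign_avg_coord_mul by auto.
  unfold offdiag. destruct (i =? j); lra.
Qed.

Lemma sign_avg_sumR_abs_ind n (C : nat -> nat -> R) :
  sign_avg n (fun t => sumR n (fun i => sumR n (fun j => Rabs (C i j) * (ind_pos t i * ind_neg t j)))) =
  sumR n (fun i => sumR n (fun j => offdiag i j * Rabs (C i j))) / 4.
Proof.
  rewrite sign_avg_sumR. unfold Rdiv. rewrite Rmult_comm, <- sumR_scal. apply sumR_ext. intros i Hi.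
  rewrite sign_avg_sumR, <- sumR_scal. apply sumR_ext. intros j Hj.
  rewrite sign_avg_scal, sign_avg_ind_pos_neg by auto. lra.
Qed.

Definition decoupled_form n (C : nat -> nat -> R) (t v : nat -> R) : R :=
  sumR n (fun i => ind_pos t i * Rabs (rsum n (fun j => C i j * ind_neg t j) v)).

Lemma sumR_abs_ind_le_decoupled_form n C t : is_sign_vector n t ->
  sumR n (fun i => sumR n (fun j => Rabs (C i j) * (ind_pos t i * ind_neg t j))) <=
  2 * sqrt (INR n) * sign_avg n (decoupled_form n C t).
Proof.
  intros Ht. unfold decoupled_form. rewrite sign_avg_sumR, <- sumR_scal.
  apply sumR_le. intros i Hi. rewrite sign_avg_scal.
  destruct (ind_pos_neg_ge0 t i (Ht i Hi)) as [Hp _].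
  rewrite (sumR_ext n _ (fun j => ind_pos t i * Rabs (C i j * ind_neg t j))).
  - rewrite sumR_scal. pose proof (khintchine n (fun j => C i j * ind_neg t j)). nra.
  - intros j Hj. destruct (ind_pos_neg_ge0 t j (Ht j Hj)) as [_ Hq].
    rewrite Rabs_mult, (Rabs_right (ind_neg t j)) by lra. ring.
Qed.

(* With [u i] the sign of the inner sum, the form is [sum_ij A_i B_j C_ij]
   for [A = ind_pos t * u] and [B = ind_neg t * v]; exactly one of [A_i], [B_i]
   is nonzero, so [A + B] and [-A + B] are sign vectors. *)
Lemma decoupled_form_sign_value_sub n E a x t v :
  is_graph n E -> is_sign_vector n t -> is_sign_vector n v ->
  exists sg tau, is_sign_vector n sg /\ is_sign_vector n tau /\
    decoupled_form n (sym_coef E (mc_coef a x)) t v = sign_value E a x sg - sign_value E a x tau.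
Proof.
  intros [_ HE] Ht Hv.
  set (C := sym_coef E (mc_coef a x)).
  set (y := fun i => rsum n (fun j => C i j * ind_neg t j) v).
  set (A := fun i => ind_pos t i * (if Rle_dec 0 (y i) then 1 else -1)).
  set (B := fun j => ind_neg t j * v j).
  exists (fun i => A i + B i), (fun i => - A i + B i).
  assert (Hsg : forall i, (i < n)%nat ->
    (A i + B i = 1 \/ A i + B i = -1) /\ (- A i + B i = 1 \/ - A i + B i = -1)).
  { intros i Hi. unfold A, B, ind_pos, ind_neg.
    destruct (Ht i Hi) as [-> | ->], (Hv i Hi) as [-> | ->], (Rle_dec 0 (y i)); lra. }
  split; [|split]; [intros i Hi; apply Hsg, Hi..|].
  rewrite sign_value_sub_polar.
  transitivity (sumR n (fun i => sumR n (fun j => A i * B j * C i j))).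
  - unfold decoupled_form. apply sumR_ext. intros i Hi. fold (y i).
    rewrite (sumR_ext n _ (fun j => A i * (C i j * ind_neg t j * v j))) by (intros; unfold B; ring).
    rewrite sumR_scal. fold (rsum n (fun j => C i j * ind_neg t j) v). fold (y i).
    unfold A. destruct (Rle_dec 0 (y i)); [rewrite Rabs_right by lra|rewrite Rabs_left by lra]; ring.
  - unfold C. rewrite sumR_sumR_sym_coef by (intros [i j] Hij; destruct (HE i j Hij); simpl; lia).
    apply lsum_ext. intros e _. ring.
Qed.

Lemma mc_width_le_sign_value_sub n E a x : is_graph n E ->
  exists sg tau, is_sign_vector n sg /\ is_sign_vector n tau /\
    lsum (fun e => Rabs (mc_coef a x e)) E <=
    8 * sqrt (INR n) * (sign_value E a x sg - sign_value E a x tau).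
Proof.
  intros HG.
  set (C := sym_coef E (mc_coef a x)).
  set (D := fun t => sign_avg n (decoupled_form n C t)).
  destruct (sign_avg_le_witness n D) as [t [Ht HDt]].
  destruct (sign_avg_le_witness n (decoupled_form n C t)) as [v [Hv Hvt]].
  destruct (decoupled_form_sign_value_sub n E a x t v HG Ht Hv) as (sg & tau & Hsg & Htau & Heq).
  exists sg, tau. split; [exact Hsg|split; [exact Htau|]].
  pose proof (sqrt_pos (INR n)).
  assert (Hdec : sumR n (fun i => sumR n (fun j => offdiag i j * Rabs (C i j))) <=
                 8 * sqrt (INR n) * sign_avg n D).
  { assert (sign_avg n (fun t' => sumR n (fun i => sumR n (fun j =>
              Rabs (C i j) * (ind_pos t' i * ind_neg t' j)))) <=
            sign_avg n (fun t' => 2 * sqrt (INR n) * D t'))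
      by (apply sign_avg_le; intros t' Ht'; apply sumR_abs_ind_le_decoupled_form, Ht').
    rewrite sign_avg_sumR_abs_ind, sign_avg_scal in H0. lra. }
  pose proof (lsum_abs_le_sym_coef n E (mc_coef a x) HG) as Hsym. fold C in Hsym.
  change (D t) with (sign_avg n (decoupled_form n C t)) in HDt.
  assert (8 * sqrt (INR n) * sign_avg n D <= 8 * sqrt (INR n) * decoupled_form n C t v)
    by (apply Rmult_le_compat_l; lra).
  fold C in Heq. rewrite <- Heq. lra.
Qed.

Theorem theorem2 (n : nat) (E : list (nat * nat)) (a : nat -> nat -> R)
    (x : nat -> R) (zc zv zu zl : R) :
  is_graph n E ->
  in_box n x ->
  is_max (in_convB n E a x) zc ->
  is_min (in_convB n E a x) zv ->
  is_max (in_Q n E a x) zu ->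
  is_min (in_Q n E a x) zl ->
  zu - zl <= 600 * sqrt (INR n) * (zc - zv).
Proof.
  intros HG Hx [Hzc Hcav] [_ Hvex] [[y [Hy ->]] _] [[y' [Hy' ->]] _].
  pose proof (mc_value_sub_le n E a x y y' Hy Hy') as Hmc.
  destruct (mc_width_le_sign_value_sub n E a x HG) as (sg & tau & Hsg & Htau & Hwidth).
  assert (Hsg_le : sign_value E a x sg <= zc) by (apply Hcav, sign_value_in_convB; auto).
  assert (Htau_ge : zv <= sign_value E a x tau) by (apply Hvex, sign_value_in_convB; auto).
  assert (Hgap : zv <= zc) by (apply Hvex, Hzc).
  pose proof (sqrt_pos (INR n)).
  assert (8 * sqrt (INR n) * (sign_value E a x sg - sign_value E a x tau) <= 8 * sqrt (INR n) * (zc - zv))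
    by (apply Rmult_le_compat_l; lra).
  assert (0 <= sqrt (INR n) * (zc - zv)) by (apply Rmult_le_pos; lra).
  lra.
Qed.
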